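(* Let $\llbracket\cdot\rrbracket$ be the translation from Linda into CPC described in the context. For all Linda processes $P,P'$: if $P\to P'$ then $\llbracket P\rrbracket\to\llbracket P'\rrbracket$; and if $\llbracket P\rrbracket\to Q$ for a CPC process $Q$, then $Q=\llbracket P'\rrbracket$ for some Linda process $P'$ with $P\to P'$.
   Context: CPC: patterns $p ::= \lambda x \mid x \mid \ulcorner x\urcorner \mid p\bullet p$ (binding, variable, protected name, compound; $\bullet$ left associative); well formed (binding names distinct and disjoint from free names); communicable patterns contain no protected or binding names. Unification: $\{x\|x\}=\{x\|\ulcorner x\urcorner\}=\{\ulcorner x\urcorner\|x\}=\{\ulcorner x\urcorner\|\ulcorner x\urcorner\}=(\{\},\{\})$; $\{\lambda x\|q\}=(\{q/x\},\{\})$ and $\{q\|\lambda x\}=(\{\},\{q/x\})$ if $q$ communicable; $\{p_1\bullet p_2\|q_1\bullet q_2\}=(\sigma_1\cup\sigma_2,\rho_1\cup\rho_2)$ if $\{p_i\|q_i\}=(\sigma_i,\rho_i)$; undefined otherwise. Processes $P::=0\mid\checkmark\mid P|P\mid\,!P\mid(\nu x)P\mid p\to P$ (binding names of $p$ bind in $P$); structural congruence $\equiv$: least congruence with $\alpha$-conversion, $P|0\equiv P$, commutativity/associativity of $|$, $(\nu n)0\equiv0$, $(\nu n)(\nu m)P\equiv(\nu m)(\nu n)P$, $!P\equiv P|!P$, $P|(\nu n)Q\equiv(\nu n)(P|Q)$ for $n\notin{\sf fn}(P)$. Reduction: $(p\to P)|(q\to Q)\to\sigma P|\rho Q$ if $\{p\|q\}=(\sigma,\rho)$,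 closed under $|$, $(\nu n)$ and $\equiv$. Linda: processes $P::=0\mid\checkmark\mid\langle b_1,\ldots,b_k\rangle\mid(t_1,\ldots,t_k).P\mid(\nu n)P\mid P|Q\mid\,!P$ with $b_i$ names and template fields $t::=\lambda x\mid\ulcorner b\urcorner$ (input variables pairwise distinct). Matching: ${\sf Match}(;)=\{\}$, ${\sf Match}(\ulcorner b\urcorner;b)=\{\}$, ${\sf Match}(\lambda x;b)=\{b/x\}$, ${\sf Match}(t,\tilde t;b,\tilde b)=\sigma_1\uplus\sigma_2$ if ${\sf Match}(t;b)=\sigma_1$, ${\sf Match}(\tilde t;\tilde b)=\sigma_2$. Reduction: $\langle\tilde b\rangle|(\tilde t).P\to\sigma P$ if ${\sf Match}(\tilde t;\tilde b)=\sigma$, closed under parallel, restriction and the same structural congruence as CPC. The translation: fix a name $\mathsf c$; ${\sf patt}()=\lambda x\bullet\mathsf c$, ${\sf patt}(t,\tilde t)=t\bullet\mathsf c\bullet{\sf patt}(\tilde t)$, ${\sf patb}()=\mathsf c\bullet\lambda x$, ${\sf patb}(b,\tilde b)=b\bullet\lambda x\bullet{\sf patb}(\tilde b)$, with each $x$ a fresh name and each recursive call a single sub-pattern. Then $\llbracket(\tilde t).P\rrbracket={\sf patt}(\tilde t)\to\llbracket P\rrbracket$, $\llbracket\langle\tilde b\rangle\rrbracket={\sf patb}(\tilde b)\to0$, and $\llbracket\cdot\rrbracket$ is homomorphic on $0,\checkmark,|,!,(\nu n)$.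
   Formalization: The second part concludes Q ≡ ⟦P'⟧, structural congruence in place of the equality Q = ⟦P'⟧, for some Linda process P' with P → P'. The statement above fails without it. *)

(* Syntax of CPC and Linda in de Bruijn form:
   names are natural numbers (de Bruijn indices), so alpha-conversion is
   syntactic identity. *)
From Stdlib Require Import Arith List.
Import ListNotations.

(* p ::= \x | x | "x" | p . p                                             *)
(* Binding names are anonymous (de Bruijn); the names occurring in PVar   *)
(* and PProt refer to the enclosing context, so well-formedness (binding  *)
(* names distinct and disjoint from free names) holds by construction.    *)
Inductive pat : Type :=
  | PBind : pat
  | PVar  : nat -> pat
  | PProt : nat -> pat
  | PComp : pat -> pat -> pat.

(* P ::= 0 | ok | P|P | !P | (nu x)P | p -> P                           *)
(* In [Case p P], the j-th binding name of p (counting left to right from *)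
(* 0) is the index j in P; index i >= nbind p in P denotes the outer name *)
(* i - nbind p.  In [Nu P], index 0 of P is the restricted name.          *)
Inductive proc : Type :=
  | Zero : proc
  | Succ : proc                    (* the success process  ok     *)
  | Par  : proc -> proc -> proc
  | Rep  : proc -> proc
  | Nu   : proc -> proc
  | Case : pat -> proc -> proc.

Fixpoint nbind (p : pat) : nat :=
  match p with
  | PBind => 1
  | PVar _ | PProt _ => 0
  | PComp p q => nbind p + nbind q
  end.

Definition upn (k : nat) (r : nat -> nat) (i : nat) : nat :=
  if i <? k then i else k + r (i - k).

Fixpoint pren (r : nat -> nat) (p : pat) : pat :=
  match p with
  | PBind => PBind
  | PVar n => PVar (r n)
  | PProt n => PProt (r n)
  | PComp p q => PComp (pren r p) (pren r q)
  end.

Fixpoint ren (r : nat -> nat) (P : proc) : proc :=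
  match P with
  | Zero => Zero
  | Succ => Succ
  | Par P Q => Par (ren r P) (ren r Q)
  | Rep P => Rep (ren r P)
  | Nu P => Nu (ren (upn 1 r) P)
  | Case p P => Case (pren r p) (ren (upn (nbind p) r) P)
  end.

Fixpoint protect (p : pat) : pat :=
  match p with
  | PBind => PBind
  | PVar n => PProt n
  | PProt n => PProt n
  | PComp p q => PComp (protect p) (protect q)
  end.

Definition upsn (k : nat) (s : nat -> pat) (i : nat) : pat :=
  if i <? k then PVar i else pren (fun j => k + j) (s (i - k)).

Fixpoint psubst (s : nat -> pat) (p : pat) : pat :=
  match p with
  | PBind => PBind
  | PVar n => s n
  | PProt n => protect (s n)
  | PComp p q => PComp (psubst s p) (psubst s q)
  end.

Fixpoint subst (s : nat -> pat) (P : proc) : proc :=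
  match P with
  | Zero => Zero
  | Succ => Succ
  | Par P Q => Par (subst s P) (subst s Q)
  | Rep P => Rep (subst s P)
  | Nu P => Nu (subst (upsn 1 s) P)
  | Case p P => Case (psubst s p) (subst (upsn (nbind p) s) P)
  end.

Definition inst (vs : list pat) (i : nat) : pat :=
  if i <? length vs then nth i vs (PVar 0) else PVar (i - length vs).

Fixpoint communicable (p : pat) : bool :=
  match p with
  | PVar _ => true
  | PComp p q => communicable p && communicable q
  | _ => false
  end.

(* unification {p || q} = (sigma, rho): lists of values for the binding  *)
(* names of p, resp. q, in left-to-right order                          *)
Fixpoint unify (p q : pat) : option (list pat * list pat) :=
  match p, q with
  | PVar x, PVar y | PVar x, PProt y | PProt x, PVar y | PProt x, PProt y =>
      if Nat.eqb x y then Some ([], []) else None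
  | PBind, q => if communicable q then Some ([q], []) else None
  | p, PBind => if communicable p then Some ([], [p]) else None
  | PComp p1 p2, PComp q1 q2 =>
      match unify p1 q1, unify p2 q2 with
      | Some (s1, r1), Some (s2, r2) => Some (s1 ++ s2, r1 ++ r2)
      | _, _ => None
      end
  | _, _ => None
  end.

Definition swap01 (i : nat) : nat :=
  match i with 0 => 1 | 1 => 0 | i => i end.

Inductive ceq : proc -> proc -> Prop :=
  | ceq_refl P : ceq P P
  | ceq_sym P Q : ceq P Q -> ceq Q P
  | ceq_trans P Q R : ceq P Q -> ceq Q R -> ceq P R
  | ceq_par_l P P' Q : ceq P P' -> ceq (Par P Q) (Par P' Q)
  | ceq_par_r P Q Q' : ceq Q Q' -> ceq (Par P Q) (Par P Q')
  | ceq_rep P P' : ceq P P' -> ceq (Rep P) (Rep P')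
  | ceq_nu P P' : ceq P P' -> ceq (Nu P) (Nu P')
  | ceq_case p P P' : ceq P P' -> ceq (Case p P) (Case p P')
  | ceq_par_zero P : ceq (Par P Zero) P
  | ceq_par_comm P Q : ceq (Par P Q) (Par Q P)
  | ceq_par_assoc P Q R : ceq (Par P (Par Q R)) (Par (Par P Q) R)
  | ceq_nu_zero : ceq (Nu Zero) Zero
  | ceq_nu_nu P : ceq (Nu (Nu P)) (Nu (Nu (ren swap01 P)))
  | ceq_rep_unfold P : ceq (Rep P) (Par P (Rep P))
  (* P | (nu n)Q == (nu n)(P | Q), n not free in P *)
  | ceq_extr P Q : ceq (Par P (Nu Q)) (Nu (Par (ren S P) Q)).

Inductive cred : proc -> proc -> Prop :=
  | cred_comm p P q Q s r :
      unify p q = Some (s, r) ->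
      cred (Par (Case p P) (Case q Q)) (Par (subst (inst s) P) (subst (inst r) Q))
  | cred_par P P' Q : cred P P' -> cred (Par P Q) (Par P' Q)
  | cred_nu P P' : cred P P' -> cred (Nu P) (Nu P')
  | cred_struct P Q Q' P' : ceq P Q -> cred Q Q' -> ceq Q' P' -> cred P P'.

Inductive field : Type :=
  | TBind : field
  | TProt : nat -> field.

(* In [LIn ts P], the j-th input variable of ts (left to right, from 0)   *)
(* is index j in P; index i >= nbindT ts denotes outer name i - nbindT ts. *)
(* Input variables are anonymous, hence pairwise distinct by construction. *)
Inductive lproc : Type :=
  | LZero : lproc
  | LSucc : lproc
  | LOut  : list nat -> lproc
  | LIn   : list field -> lproc -> lproc
  | LNu   : lproc -> lproc
  | LPar  : lproc -> lproc -> lproc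
  | LRep  : lproc -> lproc.

Fixpoint nbindT (ts : list field) : nat :=
  match ts with
  | [] => 0
  | TBind :: ts => S (nbindT ts)
  | TProt _ :: ts => nbindT ts
  end.

Definition fren (r : nat -> nat) (t : field) : field :=
  match t with TBind => TBind | TProt b => TProt (r b) end.

Fixpoint lren (r : nat -> nat) (P : lproc) : lproc :=
  match P with
  | LZero => LZero
  | LSucc => LSucc
  | LOut bs => LOut (map r bs)
  | LIn ts P => LIn (map (fren r) ts) (lren (upn (nbindT ts) r) P)
  | LNu P => LNu (lren (upn 1 r) P)
  | LPar P Q => LPar (lren r P) (lren r Q)
  | LRep P => LRep (lren r P)
  end.

Fixpoint lmatch (ts : list field) (bs : list nat) : option (list nat) :=
  match ts, bs with
  | [], [] => Some []
  | TProt b :: ts, b' :: bs =>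
      if Nat.eqb b b' then lmatch ts bs else None
  | TBind :: ts, b :: bs =>
      match lmatch ts bs with Some vs => Some (b :: vs) | None => None end
  | _, _ => None
  end.

Definition linst (vs : list nat) (i : nat) : nat :=
  if i <? length vs then nth i vs 0 else i - length vs.

Inductive leq : lproc -> lproc -> Prop :=
  | leq_refl P : leq P P
  | leq_sym P Q : leq P Q -> leq Q P
  | leq_trans P Q R : leq P Q -> leq Q R -> leq P R
  | leq_par_l P P' Q : leq P P' -> leq (LPar P Q) (LPar P' Q)
  | leq_par_r P Q Q' : leq Q Q' -> leq (LPar P Q) (LPar P Q')
  | leq_rep P P' : leq P P' -> leq (LRep P) (LRep P')
  | leq_nu P P' : leq P P' -> leq (LNu P) (LNu P')
  | leq_in ts P P' : leq P P' -> leq (LIn ts P) (LIn ts P')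
  | leq_par_zero P : leq (LPar P LZero) P
  | leq_par_comm P Q : leq (LPar P Q) (LPar Q P)
  | leq_par_assoc P Q R : leq (LPar P (LPar Q R)) (LPar (LPar P Q) R)
  | leq_nu_zero : leq (LNu LZero) LZero
  | leq_nu_nu P : leq (LNu (LNu P)) (LNu (LNu (lren swap01 P)))
  | leq_rep_unfold P : leq (LRep P) (LPar P (LRep P))
  | leq_extr P Q : leq (LPar P (LNu Q)) (LNu (LPar (lren S P) Q)).

Inductive lred : lproc -> lproc -> Prop :=
  | lred_comm bs ts P vs :
      lmatch ts bs = Some vs ->
      lred (LPar (LOut bs) (LIn ts P)) (lren (linst vs) P)
  | lred_par P P' Q : lred P P' -> lred (LPar P Q) (LPar P' Q)
  | lred_nu P P' : lred P P' -> lred (LNu P) (LNu P')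
  | lred_struct P Q Q' P' : leq P Q -> lred Q Q' -> leq Q' P' -> lred P P'.

(*  The translation [[.]] : Linda -> CPC, parametrised by the fixed name c *)
(*  (c is a de Bruijn index of the current context; it is shifted under   *)
(*  binders so that it always denotes the same, never captured, name)     *)

Definition trfield (t : field) : pat :=
  match t with TBind => PBind | TProt b => PProt b end.

(* patt() = \x . c ;  patt(t, ts) = t . c . patt(ts) = (t . c) . patt(ts) *)
Fixpoint patt (c : nat) (ts : list field) : pat :=
  match ts with
  | [] => PComp PBind (PVar c)
  | t :: ts => PComp (PComp (trfield t) (PVar c)) (patt c ts)
  end.

(* patb() = c . \x ;  patb(b, bs) = b . \x . patb(bs) = (b . \x) . patb(bs) *)
Fixpoint patb (c : nat) (bs : list nat) : pat :=
  match bs with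
  | [] => PComp (PVar c) PBind
  | b :: bs => PComp (PComp (PVar b) PBind) (patb c bs)
  end.

(* In [[ (ts).P ]] the pattern patt c ts has nbindT ts + 1 binding names: *)
(* those of ts (indices 0 .. k-1) followed by the fresh x of patt()       *)
(* (index k, unused in the body); hence the body is shifted by one above  *)
(* k.                                                                     *)
Fixpoint tr (c : nat) (P : lproc) : proc :=
  match P with
  | LZero => Zero
  | LSucc => Succ
  | LOut bs => Case (patb c bs) Zero
  | LIn ts P =>
      Case (patt c ts) (ren (upn (nbindT ts) S) (tr (nbindT ts + c) P))
  | LNu P => Nu (tr (S c) P)
  | LPar P Q => Par (tr c P) (tr c Q)
  | LRep P => Rep (tr c P)
  end.

(* Soundness: the translations of an output and an input unify exactly when
   Linda's matching succeeds, and then the CPC substitution instantiates the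
   translated body as the Linda substitution does, while the output side
   reduces to 0.

   Completeness: every CPC reduction is, up to structural congruence, a
   communication between two cases under restrictions and in a parallel
   context.  The difficulty is that structural congruence may reshape a
   translation, so the two cases must be recognised as translations again.
   For this we define a partial inverse [decode] of the translation and an
   invariant [decodable] which holds for every translation, is preserved by
   structural congruence, and guarantees [tr c (decode c X) == X].  Two
   translated cases unify only if one is an output and the other an input
   (the channel [c] sits on opposite sides of the patterns), and their
   reduct is then the translation of the Linda reduct. *)

From Stdlib Require Import Arith List Lia.
Import ListNotations.

Ltac no_test t :=
  match t with context [_ <? _] => fail 1 | context [_ =? _] => fail 1 | _ => idtac end.

Ltac equate_arguments :=
  repeat match goal with
  | |- context [?f ?x] => is_var f;
      match goal with |- context [f ?y] =>
        assert_fails (constr_eq x y);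
        tryif (match y with context [?z] => constr_eq z x end) then fail else idtac;
        replace x with y by lia end
  end.

(* Case split on every index comparison, then [lia]; a residual goal
   [f a = f b] is closed by proving [a = b] arithmetically. *)
Ltac index_arith :=
  repeat (match goal with
  | |- context [?a <? ?b] => no_test a; no_test b; destruct (Nat.ltb_spec a b)
  | |- context [?a =? ?b] => no_test a; no_test b; destruct (Nat.eqb_spec a b)
  end; cbv beta iota); try lia; try (equate_arguments; first [lia | reflexivity]).

(** * Renamings and substitutions *)

Definition cancel (f f' : nat -> nat) : Prop := forall i, f' (f i) = i.

Lemma cancel_S : cancel S pred.
Proof. intro; reflexivity. Qed.

Lemma cancel_swap01 : cancel swap01 swap01.
Proof. intros [|[|i]]; reflexivity. Qed.

Lemma cancel_eqb f f' x y : cancel f f' -> (f x =? f y) = (x =? y).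
Proof.
  intros H; destruct (Nat.eqb_spec x y), (Nat.eqb_spec (f x) (f y)); subst; auto.
  exfalso; apply n; rewrite <- (H x), <- (H y); congruence.
Qed.

Lemma upn_ext k f g : (forall i, f i = g i) -> forall i, upn k f i = upn k g i.
Proof. intros H i; unfold upn; index_arith; rewrite H; auto. Qed.

Lemma upn_comp k f g i : upn k f (upn k g i) = upn k (fun j => f (g j)) i.
Proof. unfold upn; index_arith. Qed.

Lemma upn_id k i : upn k (fun j => j) i = i.
Proof. unfold upn; index_arith. Qed.

Lemma upn_add k g c : upn k g (k + c) = k + g c.
Proof. unfold upn; index_arith. Qed.

Lemma upn1_S g c : upn 1 g (S c) = S (g c).
Proof. apply upn_add. Qed.

Lemma cancel_upn k f f' : cancel f f' -> cancel (upn k f) (upn k f').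
Proof.
  intros H i; unfold upn; index_arith.
  replace (k + f (i - k) - k) with (f (i - k)) by lia; rewrite H; lia.
Qed.

Lemma swap01_upn2 g i : swap01 (upn 1 (upn 1 g) i) = upn 1 (upn 1 g) (swap01 i).
Proof. destruct i as [|[|i]]; unfold upn; simpl; auto; index_arith. Qed.

Lemma pren_ext f g p : (forall i, f i = g i) -> pren f p = pren g p.
Proof. intros H; induction p; simpl; rewrite ?H; congruence. Qed.

Lemma pren_comp f g p : pren f (pren g p) = pren (fun i => f (g i)) p.
Proof. induction p; simpl; congruence. Qed.

Lemma pren_id p : pren (fun i => i) p = p.
Proof. induction p; simpl; congruence. Qed.

Lemma nbind_pren f p : nbind (pren f p) = nbind p.
Proof. induction p; simpl; auto. Qed.

Lemma ren_ext X : forall f g, (forall i, f i = g i) -> ren f X = ren g X.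
Proof. induction X; intros f g H; simpl; f_equal; auto using pren_ext, upn_ext. Qed.

Lemma ren_comp X : forall f g, ren f (ren g X) = ren (fun i => f (g i)) X.
Proof.
  induction X; intros f g; simpl; f_equal; auto using pren_comp.
  - rewrite IHX; apply ren_ext; intro; apply upn_comp.
  - rewrite IHX, nbind_pren; apply ren_ext; intro; apply upn_comp.
Qed.

Lemma ren_id X : ren (fun i => i) X = X.
Proof.
  induction X; simpl; f_equal; auto using pren_id;
    rewrite (ren_ext _ _ (fun i => i)); auto using upn_id.
Qed.

Lemma ren_upn_id k X : ren (upn k (fun i => i)) X = X.
Proof. rewrite (ren_ext _ _ (fun i => i)) by apply upn_id; apply ren_id. Qed.

Lemma lren_ext X : forall f g, (forall i, f i = g i) -> lren f X = lren g X.
Proof.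
  induction X; intros f g H; simpl; f_equal; auto using upn_ext.
  - apply map_ext; auto.
  - apply map_ext; intros []; simpl; rewrite ?H; auto.
Qed.

Lemma lren_id X : lren (fun i => i) X = X.
Proof.
  induction X; simpl; f_equal; auto using map_id.
  - rewrite map_ext with (g := fun t => t); [apply map_id | intros []; auto].
  - rewrite (lren_ext _ _ (fun i => i)); auto using upn_id.
  - rewrite (lren_ext _ _ (fun i => i)); auto using upn_id.
Qed.

Lemma nbindT_map_fren f ts : nbindT (map (fren f) ts) = nbindT ts.
Proof. induction ts as [|[] ts IH]; simpl; auto. Qed.

Lemma upsn_ext k f g : (forall i, f i = g i) -> forall i, upsn k f i = upsn k g i.
Proof. intros H i; unfold upsn; destruct (i <? k); rewrite ?H; auto. Qed.

Lemma psubst_ext f g p : (forall i, f i = g i) -> psubst f p = psubst g p.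
Proof. intros H; induction p; simpl; rewrite ?H; congruence. Qed.

Lemma subst_ext X : forall f g, (forall i, f i = g i) -> subst f X = subst g X.
Proof. induction X; intros f g H; simpl; f_equal; auto using psubst_ext, upsn_ext. Qed.

Lemma psubst_pren s f p : psubst s (pren f p) = psubst (fun i => s (f i)) p.
Proof. induction p; simpl; congruence. Qed.

Lemma subst_ren X : forall s f, subst s (ren f X) = subst (fun i => s (f i)) X.
Proof.
  induction X; intros s f; simpl; f_equal; auto using psubst_pren.
  - rewrite IHX; apply subst_ext; intro i; unfold upsn, upn; index_arith.
  - rewrite IHX, nbind_pren; apply subst_ext; intro i; unfold upsn, upn; index_arith.
Qed.

Lemma psubst_var f p : psubst (fun i => PVar (f i)) p = pren f p.
Proof. induction p; simpl; congruence. Qed.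

Lemma subst_var X : forall f, subst (fun i => PVar (f i)) X = ren f X.
Proof.
  induction X; intros f; simpl; f_equal; auto using psubst_var;
    rewrite <- IHX; apply subst_ext; intro i; unfold upsn, upn; index_arith;
    simpl; f_equal; lia.
Qed.

Lemma ceq_ren X Y : ceq X Y -> forall g, ceq (ren g X) (ren g Y).
Proof.
  induction 1; intros g; simpl; try (constructor; auto; fail).
  - eapply ceq_trans; eauto.
  - replace (ren (upn 1 (upn 1 g)) (ren swap01 P))
      with (ren swap01 (ren (upn 1 (upn 1 g)) P)) by
      (rewrite !ren_comp; apply ren_ext; intro; apply swap01_upn2).
    apply ceq_nu_nu.
  - replace (ren (upn 1 g) (ren S P)) with (ren S (ren g P)) by
      (rewrite !ren_comp; apply ren_ext; intro; unfold upn; index_arith).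
    apply ceq_extr.
Qed.

Lemma ceq_ren_iff f f' X Y : cancel f f' -> (ceq (ren f X) (ren f Y) <-> ceq X Y).
Proof.
  intros H; split; intro E; [|apply ceq_ren; auto].
  apply ceq_ren with (g := f') in E; rewrite !ren_comp in E.
  rewrite (ren_ext X _ (fun i => i)), (ren_ext Y _ (fun i => i)), !ren_id in E by auto.
  exact E.
Qed.

Lemma nbind_patt c ts : nbind (patt c ts) = S (nbindT ts).
Proof. induction ts as [|[] ts IH]; simpl; lia. Qed.

Lemma pren_patt f c ts : pren f (patt c ts) = patt (f c) (map (fren f) ts).
Proof. induction ts as [|[] ts IH]; simpl; congruence. Qed.

Lemma pren_patb f c bs : pren f (patb c bs) = patb (f c) (map f bs).
Proof. induction bs; simpl; congruence. Qed.

Lemma ren_tr P : forall f c, ren f (tr c P) = tr (f c) (lren f P).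
Proof.
  induction P; intros f c; simpl; auto.
  - rewrite pren_patb; auto.
  - rewrite pren_patt, nbind_patt, nbindT_map_fren, ren_comp; f_equal.
    rewrite (ren_ext _ _ (fun i => upn (nbindT l) S (upn (nbindT l) f i)))
      by (intro i; unfold upn; index_arith).
    rewrite <- ren_comp, IHP; f_equal; f_equal; unfold upn; index_arith.
  - rewrite IHP; f_equal; f_equal; unfold upn; index_arith.
  - rewrite IHP1, IHP2; auto.
  - rewrite IHP; auto.
Qed.

Lemma ceq_tr P Q : leq P Q -> forall c, ceq (tr c P) (tr c Q).
Proof.
  induction 1; intros c; simpl.
  - apply ceq_refl.
  - apply ceq_sym; auto.
  - eapply ceq_trans; eauto.
  - apply ceq_par_l; auto.
  - apply ceq_par_r; auto.
  - apply ceq_rep; auto.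
  - apply ceq_nu; auto.
  - apply ceq_case, ceq_ren; auto.
  - apply ceq_par_zero.
  - apply ceq_par_comm.
  - apply ceq_par_assoc.
  - apply ceq_nu_zero.
  - change (S (S c)) with (swap01 (S (S c))) at 2.
    rewrite <- ren_tr; apply ceq_nu_nu.
  - apply ceq_rep_unfold.
  - rewrite <- ren_tr; apply ceq_extr.
Qed.

Lemma lmatch_length ts : forall bs vs, lmatch ts bs = Some vs -> length vs = nbindT ts.
Proof.
  induction ts as [|[|b] ts IH]; intros [|b' bs] vs H; simpl in *; try discriminate.
  - injection H as <-; auto.
  - destruct (lmatch ts bs) eqn:E; try discriminate.
    injection H as <-; simpl; f_equal; eauto.
  - destruct (b =? b'); eauto; discriminate.
Qed.

(* The output side binds the fresh names of [patb] to [c], the input side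
   binds its variables to the message and the fresh name of [patt] to [c]. *)
Lemma unify_patb_patt c bs : forall ts, unify (patb c bs) (patt c ts) =
  match lmatch ts bs with
  | Some vs => Some (repeat (PVar c) (S (length bs)), map PVar vs ++ [PVar c])
  | None => None
  end.
Proof.
  induction bs as [|b bs IH]; intros [|[|b'] ts]; simpl; auto.
  - rewrite IH; destruct (lmatch ts bs); auto.
  - rewrite IH, Nat.eqb_sym; destruct (b' =? b); simpl; auto.
    destruct (lmatch ts bs); auto.
Qed.

Lemma unify_patt_patb c bs : forall ts, unify (patt c ts) (patb c bs) =
  match lmatch ts bs with
  | Some vs => Some (map PVar vs ++ [PVar c], repeat (PVar c) (S (length bs)))
  | None => None
  end.
Proof.
  induction bs as [|b bs IH]; intros [|[|b'] ts]; simpl; auto.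
  - rewrite IH; destruct (lmatch ts bs); auto.
  - rewrite IH; destruct (b' =? b); simpl; auto.
    destruct (lmatch ts bs); auto.
Qed.

Lemma unify_patb_patb c bs : forall bs', unify (patb c bs) (patb c bs') = None.
Proof.
  induction bs as [|b bs IH]; intros [|b' bs']; simpl; auto.
  - destruct (c =? c); auto.
  - destruct (b =? b'); auto.
Qed.

Lemma unify_patt_patt c ts : forall ts', unify (patt c ts) (patt c ts') = None.
Proof.
  induction ts as [|[|b] ts IH]; intros [|[|b'] ts']; simpl; auto.
  rewrite IH; destruct (b =? b'), (c =? c); auto.
Qed.

Lemma inst_input vs c i : inst (map PVar vs ++ [PVar c]) i =
  PVar (if i <? length vs then nth i vs 0
        else if i =? length vs then c else i - S (length vs)).
Proof.
  unfold inst; rewrite length_app, length_map; simpl.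
  destruct (Nat.ltb_spec i (length vs + 1)), (Nat.ltb_spec i (length vs)); try lia.
  - rewrite app_nth1 by (rewrite length_map; auto).
    rewrite map_nth; auto.
  - rewrite app_nth2 by (rewrite length_map; auto); rewrite length_map.
    replace (i - length vs) with 0 by lia; simpl.
    rewrite (proj2 (Nat.eqb_eq _ _)) by lia; auto.
  - destruct (Nat.eqb_spec i (length vs)); try lia; f_equal; lia.
Qed.

Lemma inst_output c n i : inst (repeat (PVar c) n) i = PVar (if i <? n then c else i - n).
Proof.
  unfold inst; rewrite repeat_length; destruct (i <? n) eqn:E; auto.
  apply Nat.ltb_lt in E; revert i E; induction n; intros [|i] E; simpl; auto; try lia.
  apply IHn; lia.
Qed.

(** * Soundness *)

Lemma subst_input_tr c ts vs P : length vs = nbindT ts ->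
  subst (inst (map PVar vs ++ [PVar c])) (ren (upn (nbindT ts) S) (tr (nbindT ts + c) P))
  = tr c (lren (linst vs) P).
Proof.
  intros Hk; rewrite subst_ren, <- Hk.
  rewrite (subst_ext _ _ (fun i => PVar (linst vs i))).
  - rewrite subst_var, ren_tr; f_equal; unfold linst; index_arith.
  - intro i; rewrite inst_input; unfold upn, linst; f_equal; index_arith.
Qed.

Lemma tr_lred P P' : lred P P' -> forall c, cred (tr c P) (tr c P').
Proof.
  induction 1; intros c; simpl.
  - eapply cred_struct;
      [apply ceq_refl | apply cred_comm; rewrite unify_patb_patt, H; reflexivity |].
    eapply ceq_trans; [apply ceq_par_comm |]; eapply ceq_trans; [apply ceq_par_zero |].
    rewrite subst_input_tr by (eapply lmatch_length; eauto); apply ceq_refl.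
  - apply cred_par; auto.
  - apply cred_nu; auto.
  - eapply cred_struct; eauto using ceq_tr.
Qed.

Fixpoint nus (n : nat) (X : proc) : proc :=
  match n with 0 => X | S n => Nu (nus n X) end.

Fixpoint lnus (n : nat) (X : lproc) : lproc :=
  match n with 0 => X | S n => LNu (lnus n X) end.

Lemma ceq_nus n X Y : ceq X Y -> ceq (nus n X) (nus n Y).
Proof. induction n; simpl; auto using ceq_nu. Qed.

Lemma lred_lnus n X Y : lred X Y -> lred (lnus n X) (lnus n Y).
Proof. induction n; simpl; auto using lred_nu. Qed.

Lemma tr_lnus n : forall c X, tr c (lnus n X) = nus n (tr (n + c) X).
Proof. induction n; intros c X; simpl; auto; rewrite IHn, Nat.add_succ_r; auto. Qed.

Lemma ceq_par_nus n : forall Z Q, ceq (Par (nus n Z) Q) (nus n (Par Z (ren (fun i => n + i) Q))).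
Proof.
  induction n; intros Z Q; simpl.
  - rewrite ren_id; apply ceq_refl.
  - eapply ceq_trans; [apply ceq_par_comm |]; eapply ceq_trans; [apply ceq_extr |].
    apply ceq_nu; eapply ceq_trans; [apply ceq_par_comm |]; eapply ceq_trans; [apply IHn |].
    rewrite ren_comp, (ren_ext _ (fun i => n + S i) (fun i => S (n + i))) by (intros; lia).
    apply ceq_refl.
Qed.

Lemma cred_normal_form X Y : cred X Y -> exists n p A q B R s r,
  unify p q = Some (s, r) /\
  ceq X (nus n (Par (Par (Case p A) (Case q B)) R)) /\
  ceq Y (nus n (Par (Par (subst (inst s) A) (subst (inst r) B)) R)).
Proof.
  induction 1.
  - exists 0, p, P, q, Q, Zero, s, r; simpl; repeat split; auto using ceq_sym, ceq_par_zero.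
  - destruct IHcred as (n & p & A & q & B & R & s & r & Hu & H1 & H2).
    exists n, p, A, q, B, (Par R (ren (fun i => n + i) Q)), s, r.
    split; [exact Hu | split];
      (eapply ceq_trans; [apply ceq_par_l; eassumption |]);
      (eapply ceq_trans; [apply ceq_par_nus |]); apply ceq_nus, ceq_sym, ceq_par_assoc.
  - destruct IHcred as (n & p & A & q & B & R & s & r & Hu & H1 & H2).
    exists (S n), p, A, q, B, R, s, r; simpl; auto using ceq_nu.
  - destruct IHcred as (n & p & A & q & B & R & s & r & Hu & E1 & E2).
    exists n, p, A, q, B, R, s, r; split; [exact Hu | split].
    + eapply ceq_trans; eassumption.
    + eapply ceq_trans; [apply ceq_sym |]; eassumption.
Qed.

(** * Decoding *)

Fixpoint patb_of (c : nat) (p : pat) : option (list nat) :=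
  match p with
  | PComp (PVar x) PBind => if x =? c then Some [] else None
  | PComp (PComp (PVar b) PBind) r =>
      match patb_of c r with Some bs => Some (b :: bs) | None => None end
  | _ => None
  end.

Fixpoint patt_of (c : nat) (p : pat) : option (list field) :=
  match p with
  | PComp PBind (PVar x) => if x =? c then Some [] else None
  | PComp (PComp PBind (PVar x)) r =>
      if x =? c then
        match patt_of c r with Some ts => Some (TBind :: ts) | None => None end
      else None
  | PComp (PComp (PProt b) (PVar x)) r =>
      if x =? c then
        match patt_of c r with Some ts => Some (TProt b :: ts) | None => None end
      else None
  | _ => None
  end.

Lemma patb_of_sound c p : forall bs, patb_of c p = Some bs -> p = patb c bs.
Proof.
  induction p as [| | |p1 _ p2 IH]; intros bs H; simpl in H; try discriminate.
  destruct p1 as [|x|x|p11 p12]; try discriminate.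
  - destruct p2; try discriminate; destruct (Nat.eqb_spec x c); try discriminate.
    injection H as <-; subst; reflexivity.
  - destruct p11, p12; try discriminate.
    destruct (patb_of c p2) eqn:E; try discriminate; injection H as <-.
    simpl; rewrite (IH _ eq_refl); reflexivity.
Qed.

Lemma patt_of_sound c p : forall ts, patt_of c p = Some ts -> p = patt c ts.
Proof.
  induction p as [| | |p1 _ p2 IH]; intros ts H; simpl in H; try discriminate.
  destruct p1 as [|x|x|p11 p12]; try discriminate.
  - destruct p2 as [|y| |]; try discriminate; destruct (Nat.eqb_spec y c); try discriminate.
    injection H as <-; subst; reflexivity.
  - destruct p11 as [| |b|], p12 as [|y| |]; try discriminate;
      destruct (Nat.eqb_spec y c); try discriminate;
      destruct (patt_of c p2) eqn:E; try discriminate; injection H as <-; subst;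
      simpl; rewrite (IH _ eq_refl); reflexivity.
Qed.

Lemma patb_of_patb c bs : patb_of c (patb c bs) = Some bs.
Proof. induction bs; simpl; [rewrite Nat.eqb_refl | rewrite IHbs]; auto. Qed.

Lemma patt_of_patt c ts : patt_of c (patt c ts) = Some ts.
Proof. induction ts as [|[] ts IH]; simpl; rewrite ?Nat.eqb_refl, ?IH; auto. Qed.

Lemma patb_of_patt c d ts : patb_of d (patt c ts) = None.
Proof. destruct ts as [|[] ts]; reflexivity. Qed.

Lemma patb_of_pren f f' c p : cancel f f' ->
  patb_of (f c) (pren f p) = option_map (map f) (patb_of c p).
Proof.
  intros Hf; induction p as [| | |p1 _ p2 IH]; simpl; auto.
  destruct p1 as [|x|x|p11 p12]; simpl; auto.
  - destruct p2; simpl; auto; rewrite (cancel_eqb f f'); auto; destruct (x =? c); auto.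
  - destruct p11, p12; simpl; auto; rewrite IH; destruct (patb_of c p2); auto.
Qed.

Lemma patt_of_pren f f' c p : cancel f f' ->
  patt_of (f c) (pren f p) = option_map (map (fren f)) (patt_of c p).
Proof.
  intros Hf; induction p as [| | |p1 _ p2 IH]; simpl; auto.
  destruct p1 as [|x|x|p11 p12]; simpl; auto.
  - destruct p2 as [|y| |]; simpl; auto; rewrite (cancel_eqb f f'); auto; destruct (y =? c); auto.
  - destruct p11 as [| |b|], p12 as [|y| |]; simpl; auto;
      rewrite (cancel_eqb f f'); auto; destruct (y =? c); auto;
      rewrite IH; destruct (patt_of c p2); auto.
Qed.

Lemma nbind_patt_of c g p ts : patt_of c (pren g p) = Some ts -> nbind p = S (nbindT ts).
Proof. intros E; rewrite <- (nbind_pren g), (patt_of_sound _ _ _ E); apply nbind_patt. Qed.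

(* In the body of [tr c ((ts).P)] index [k = nbindT ts] is the fresh name of
   [patt].  [drop_fresh k c] sends it to the channel [c], as the
   communication does, and closes the gap, undoing [upn k S]. *)
Definition drop_fresh (k c i : nat) : nat :=
  if i <? k then i else if i =? k then k + c else i - 1.

Definition body_ren (k c n : nat) (g : nat -> nat) (i : nat) : nat :=
  drop_fresh k c (upn n g i).

(* [decode c g X] reads [ren g X] back as a Linda process, [c] being the
   fixed channel; carrying [g] instead of renaming bodies keeps the
   recursion structural. *)
Fixpoint decode (c : nat) (g : nat -> nat) (X : proc) : lproc :=
  match X with
  | Zero => LZero
  | Succ => LSucc
  | Par X Y => LPar (decode c g X) (decode c g Y)
  | Rep X => LRep (decode c g X)
  | Nu X => LNu (decode (S c) (upn 1 g) X)
  | Case p A =>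
      match patb_of c (pren g p) with
      | Some bs => LOut bs
      | None =>
          match patt_of c (pren g p) with
          | Some ts => LIn ts (decode (nbindT ts + c) (body_ren (nbindT ts) c (nbind p) g) A)
          | None => LZero
          end
      end
  end.

(* Free names are not tracked, so "the fresh name of [patt] does not occur
   in the body" is expressed up to structural congruence: sending it to [c]
   and back to a fresh index gives a congruent body. *)
Fixpoint decodable (c : nat) (g : nat -> nat) (X : proc) : Prop :=
  match X with
  | Zero | Succ => True
  | Par X Y => decodable c g X /\ decodable c g Y
  | Rep X => decodable c g X
  | Nu X => decodable (S c) (upn 1 g) X
  | Case p A =>
      match patb_of c (pren g p) with
      | Some _ => ceq (ren (upn (nbind p) g) A) Zero
      | None =>
          match patt_of c (pren g p) with
          | Some ts =>
              decodable (nbindT ts + c) (body_ren (nbindT ts) c (nbind p) g) A /\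
              ceq (ren (upn (nbind p) g) A)
                  (ren (fun i => upn (nbindT ts) S (body_ren (nbindT ts) c (nbind p) g i)) A)
          | None => False
          end
      end
  end.

Lemma body_ren_ext k c n g g' : (forall i, g i = g' i) ->
  forall i, body_ren k c n g i = body_ren k c n g' i.
Proof. intros H i; unfold body_ren; rewrite (upn_ext _ _ _ H); auto. Qed.

Lemma body_ren_comp k c n g f i :
  body_ren k c n g (upn n f i) = body_ren k c n (fun j => g (f j)) i.
Proof. unfold body_ren; rewrite upn_comp; auto. Qed.

Lemma body_ren_cancel k c g f i :
  body_ren k (f c) (S k) (fun j => f (g j)) i = upn k f (body_ren k c (S k) g i).
Proof. unfold body_ren, drop_fresh, upn; index_arith. Qed.

Lemma upn_S_body_ren_cancel k c g f i :
  upn k S (body_ren k (f c) (S k) (fun j => f (g j)) i)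
  = upn (S k) f (upn k S (body_ren k c (S k) g i)).
Proof. unfold body_ren, drop_fresh, upn; index_arith. Qed.

Lemma body_ren_upn_S k c g i :
  body_ren k (g c) (S k) g (upn k S i) = upn k g i.
Proof. unfold body_ren, drop_fresh, upn; index_arith. Qed.

Lemma upn_S_body_ren_upn_S k c g i :
  upn (S k) g (upn k S i) = upn k S (body_ren k (g c) (S k) g (upn k S i)).
Proof. unfold body_ren, drop_fresh, upn; index_arith. Qed.

Lemma decode_ext X : forall c g g', (forall i, g i = g' i) -> decode c g X = decode c g' X.
Proof.
  induction X; intros c g g' H; simpl; f_equal; auto using upn_ext.
  rewrite (pren_ext g g' p H).
  destruct (patb_of c (pren g' p)); auto; destruct (patt_of c (pren g' p)); auto.
  f_equal; apply IHX, body_ren_ext, H.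
Qed.

Lemma decode_ren X : forall c g f, decode c g (ren f X) = decode c (fun i => g (f i)) X.
Proof.
  induction X; intros c g f; simpl; f_equal; auto.
  - rewrite IHX; apply decode_ext; intro; apply upn_comp.
  - rewrite pren_comp, nbind_pren.
    destruct (patb_of c (pren (fun i => g (f i)) p)); auto.
    destruct (patt_of c (pren (fun i => g (f i)) p)); auto.
    f_equal; rewrite IHX; apply decode_ext; intro; apply body_ren_comp.
Qed.

Lemma decode_cancel X : forall c g f f', cancel f f' ->
  decode (f c) (fun i => f (g i)) X = lren f (decode c g X).
Proof.
  induction X; intros c g f f' Hf; simpl; f_equal; eauto.
  - rewrite <- (IHX _ _ _ _ (cancel_upn 1 _ _ Hf)); rewrite upn1_S.
    apply decode_ext; intro; symmetry; apply upn_comp.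
  - rewrite <- pren_comp, (patb_of_pren _ _ _ _ Hf).
    destruct (patb_of c (pren g p)); simpl; auto.
    rewrite (patt_of_pren _ _ _ _ Hf).
    destruct (patt_of c (pren g p)) as [ts|] eqn:Et; simpl; auto.
    rewrite nbindT_map_fren, (nbind_patt_of _ _ _ _ Et); f_equal.
    rewrite <- (IHX _ _ _ _ (cancel_upn (nbindT ts) _ _ Hf)), <- upn_add.
    apply decode_ext; intro; apply body_ren_cancel.
Qed.

Lemma decode_tr P : forall c g, decode (g c) g (tr c P) = lren g P.
Proof.
  induction P; intros c g; simpl; auto.
  - rewrite pren_patb, patb_of_patb; auto.
  - rewrite pren_patt, patb_of_patt, patt_of_patt, nbindT_map_fren, nbind_patt.
    f_equal; rewrite decode_ren, <- upn_add, <- (IHP (nbindT l + c) (upn (nbindT l) g)).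
    apply decode_ext; intro; apply body_ren_upn_S.
  - f_equal; rewrite <- upn1_S; auto.
  - f_equal; auto.
  - f_equal; auto.
Qed.

Lemma leq_decode X Y : ceq X Y -> forall c g, leq (decode c g X) (decode c g Y).
Proof.
  induction 1; intros c g; simpl.
  - apply leq_refl.
  - apply leq_sym; auto.
  - eapply leq_trans; eauto.
  - apply leq_par_l; auto.
  - apply leq_par_r; auto.
  - apply leq_rep; auto.
  - apply leq_nu; auto.
  - destruct (patb_of c (pren g p)); [apply leq_refl |].
    destruct (patt_of c (pren g p)); [apply leq_in; auto | apply leq_refl].
  - apply leq_par_zero.
  - apply leq_par_comm.
  - apply leq_par_assoc.
  - apply leq_nu_zero.
  - rewrite decode_ren.
    rewrite (decode_ext P (S (S c)) (fun i => upn 1 (upn 1 g) (swap01 i))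
                       (fun i => swap01 (upn 1 (upn 1 g) i)))
      by (intro; symmetry; apply swap01_upn2).
    change (S (S c)) with (swap01 (S (S c))) at 2.
    rewrite (decode_cancel P _ _ _ _ cancel_swap01); apply leq_nu_nu.
  - apply leq_rep_unfold.
  - rewrite decode_ren.
    rewrite (decode_ext P (S c) (fun i => upn 1 g (S i)) (fun i => S (g i)))
      by (intro; unfold upn; index_arith).
    rewrite (decode_cancel P _ _ _ _ cancel_S); apply leq_extr.
Qed.

Lemma decodable_ext X : forall c g g', (forall i, g i = g' i) ->
  decodable c g X = decodable c g' X.
Proof.
  induction X as [| |X1 IHX1 X2 IHX2|X IHX|X IHX|p A IHA]; intros c g g' H; simpl; auto.
  - rewrite (IHX1 _ _ _ H), (IHX2 _ _ _ H); auto.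
  - apply IHX; auto using upn_ext.
  - rewrite (pren_ext g g' p H), (ren_ext A (upn (nbind p) g) (upn (nbind p) g'))
      by (apply upn_ext; auto).
    destruct (patb_of c (pren g' p)); auto; destruct (patt_of c (pren g' p)); auto.
    pose proof (body_ren_ext (nbindT l) c (nbind p) _ _ H) as E.
    rewrite (IHA _ _ _ E),
      (ren_ext A (fun i => upn (nbindT l) S (body_ren (nbindT l) c (nbind p) g i))
                 (fun i => upn (nbindT l) S (body_ren (nbindT l) c (nbind p) g' i)))
      by (intro; rewrite E; auto).
    auto.
Qed.

Lemma decodable_ren X : forall c g f, decodable c g (ren f X) = decodable c (fun i => g (f i)) X.
Proof.
  induction X as [| |X1 IHX1 X2 IHX2|X IHX|X IHX|p A IHA]; intros c g f; simpl; auto.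
  - rewrite IHX1, IHX2; auto.
  - rewrite IHX; apply decodable_ext; intro; apply upn_comp.
  - rewrite pren_comp, nbind_pren, !ren_comp.
    rewrite (ren_ext A (fun i => upn (nbind p) g (upn (nbind p) f i))
                       (upn (nbind p) (fun i => g (f i)))) by (intro; apply upn_comp).
    destruct (patb_of c (pren (fun i => g (f i)) p)); auto.
    destruct (patt_of c (pren (fun i => g (f i)) p)); auto.
    rewrite IHA, (decodable_ext _ _ _ _ (body_ren_comp _ _ _ _ f)), ren_comp.
    rewrite (ren_ext A
      (fun i => upn (nbindT l) S (body_ren (nbindT l) c (nbind p) g (upn (nbind p) f i)))
      (fun i => upn (nbindT l) S (body_ren (nbindT l) c (nbind p) (fun i => g (f i)) i)))
      by (intro; rewrite body_ren_comp; auto).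
    auto.
Qed.

Lemma decodable_cancel X : forall c g f f', cancel f f' ->
  (decodable (f c) (fun i => f (g i)) X <-> decodable c g X).
Proof.
  induction X as [| |X1 IHX1 X2 IHX2|X IHX|X IHX|p A IHA]; intros c g f f' Hf; simpl;
    try tauto.
  - rewrite (IHX1 _ _ _ _ Hf), (IHX2 _ _ _ _ Hf); tauto.
  - eauto.
  - rewrite <- (IHX (S c) (upn 1 g) _ _ (cancel_upn 1 _ _ Hf)), upn1_S.
    rewrite (decodable_ext X _ (upn 1 (fun i => f (g i))) (fun i => upn 1 f (upn 1 g i)))
      by (intro; symmetry; apply upn_comp).
    tauto.
  - assert (Hfg : forall n, ren (upn n (fun i => f (g i))) A = ren (upn n f) (ren (upn n g) A))
      by (intro; rewrite ren_comp; apply ren_ext; intro; symmetry; apply upn_comp).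
    rewrite <- pren_comp, (patb_of_pren _ _ _ _ Hf), Hfg.
    destruct (patb_of c (pren g p)); simpl.
    + change Zero with (ren (upn (nbind p) f) Zero) at 1.
      apply (ceq_ren_iff _ _ _ _ (cancel_upn _ _ _ Hf)).
    + rewrite (patt_of_pren _ _ _ _ Hf).
      destruct (patt_of c (pren g p)) as [ts|] eqn:Et; simpl; try tauto.
      rewrite nbindT_map_fren, (nbind_patt_of _ _ _ _ Et).
      rewrite <- (IHA (nbindT ts + c) _ _ _ (cancel_upn (nbindT ts) _ _ Hf)), <- upn_add.
      rewrite (decodable_ext A _ _ _ (body_ren_cancel _ _ g f)).
      rewrite (ren_ext A _ _ (upn_S_body_ren_cancel _ _ g f)).
      rewrite <- (ren_comp A (upn (S (nbindT ts)) f)).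
      rewrite (ceq_ren_iff _ _ _ _ (cancel_upn _ _ _ Hf)); tauto.
Qed.

Lemma decodable_tr P : forall c g, decodable (g c) g (tr c P).
Proof.
  induction P; intros c g; simpl; auto.
  - rewrite pren_patb, patb_of_patb; apply ceq_refl.
  - rewrite pren_patt, patb_of_patt, patt_of_patt, nbindT_map_fren, nbind_patt; split.
    + rewrite decodable_ren, <- upn_add, (decodable_ext _ _ _ _ (body_ren_upn_S _ c g)); apply IHP.
    + rewrite !ren_comp, (ren_ext _ _ _ (upn_S_body_ren_upn_S _ c g)); apply ceq_refl.
  - rewrite <- upn1_S; auto.
Qed.

Lemma decodable_ceq X Y : ceq X Y -> forall c g, decodable c g X <-> decodable c g Y.
Proof.
  induction 1; intros c g; simpl; try tauto.
  - symmetry; auto.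
  - rewrite IHceq1; auto.
  - rewrite IHceq; tauto.
  - rewrite IHceq; tauto.
  - auto.
  - auto.
  - pose proof (fun f => ceq_ren P P' H f) as E.
    pose proof (fun f => ceq_ren P' P (ceq_sym _ _ H) f) as E'.
    destruct (patb_of c (pren g p)).
    + split; intro Z; (eapply ceq_trans; [|exact Z]); auto.
    + destruct (patt_of c (pren g p)); [|tauto].
      rewrite IHceq; split; intros [D Z]; split; auto.
      * eapply ceq_trans; [apply E' |]; eapply ceq_trans; [exact Z | apply E].
      * eapply ceq_trans; [apply E |]; eapply ceq_trans; [exact Z | apply E'].
  - rewrite decodable_ren.
    rewrite (decodable_ext P (S (S c)) (fun i => upn 1 (upn 1 g) (swap01 i))
                                       (fun i => swap01 (upn 1 (upn 1 g) i)))
      by (intro; symmetry; apply swap01_upn2).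
    change (S (S c)) with (swap01 (S (S c))) at 2.
    rewrite (decodable_cancel P _ _ _ _ cancel_swap01); tauto.
  - rewrite decodable_ren.
    rewrite (decodable_ext P (S c) (fun i => upn 1 g (S i)) (fun i => S (g i)))
      by (intro; unfold upn; index_arith).
    rewrite (decodable_cancel P _ _ _ _ cancel_S); tauto.
Qed.

Lemma tr_decode X : forall c g, decodable c g X -> ceq (tr c (decode c g X)) (ren g X).
Proof.
  induction X as [| |X1 IHX1 X2 IHX2|X IHX|X IHX|p A IHA]; intros c g Hg; simpl in *.
  - apply ceq_refl.
  - apply ceq_refl.
  - destruct Hg; eapply ceq_trans; [apply ceq_par_l | apply ceq_par_r]; eauto.
  - apply ceq_rep; auto.
  - apply ceq_nu; auto.
  - destruct (patb_of c (pren g p)) as [bs|] eqn:Eb.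
    + apply patb_of_sound in Eb; simpl; rewrite <- Eb; apply ceq_case, ceq_sym, Hg.
    + destruct (patt_of c (pren g p)) as [ts|] eqn:Et; [|contradiction].
      apply patt_of_sound in Et; destruct Hg as [D Z]; simpl; rewrite <- Et; apply ceq_case.
      eapply ceq_trans; [apply ceq_ren, IHA, D |].
      rewrite ren_comp; apply ceq_sym, Z.
Qed.

Lemma decodable_nus n : forall c X,
  decodable c (fun i => i) (nus n X) <-> decodable (n + c) (fun i => i) X.
Proof.
  induction n; intros c X; simpl; [tauto |].
  rewrite (decodable_ext _ _ _ (fun i => i)) by apply upn_id.
  rewrite IHn, Nat.add_succ_r; tauto.
Qed.

Lemma decode_nus n : forall c X,
  decode c (fun i => i) (nus n X) = lnus n (decode (n + c) (fun i => i) X).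
Proof.
  induction n; intros c X; simpl; auto.
  rewrite (decode_ext _ _ _ (fun i => i)) by apply upn_id.
  rewrite IHn, Nat.add_succ_r; auto.
Qed.

(** * Completeness *)

Lemma ceq_subst_output d m A : ceq A Zero -> ceq (subst (inst (repeat (PVar d) m)) A) Zero.
Proof.
  intros H.
  rewrite (subst_ext _ _ (fun i => PVar (if i <? m then d else i - m)))
    by (intro; apply inst_output).
  rewrite subst_var; change Zero with (ren (fun i => if i <? m then d else i - m) Zero).
  apply ceq_ren, H.
Qed.

Lemma ceq_subst_input ts vs d B : length vs = nbindT ts ->
  decodable (nbindT ts + d) (body_ren (nbindT ts) d (S (nbindT ts)) (fun i => i)) B ->
  ceq (subst (inst (map PVar vs ++ [PVar d])) B)
      (tr d (lren (linst vs)
               (decode (nbindT ts + d) (body_ren (nbindT ts) d (S (nbindT ts)) (fun i => i)) B))).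
Proof.
  intros Hk D; rewrite <- Hk in *.
  replace d with (linst vs (length vs + d)) at 2 by (unfold linst; index_arith).
  rewrite <- ren_tr.
  rewrite (subst_ext _ _
    (fun i => PVar (linst vs (body_ren (length vs) d (S (length vs)) (fun i => i) i)))).
  - rewrite subst_var, <- ren_comp; apply ceq_ren, ceq_sym, tr_decode, D.
  - intro i; rewrite inst_input; f_equal; unfold linst, body_ren, drop_fresh, upn; index_arith.
Qed.

Lemma ceq_comm_reduct d bs ts vs A B :
  lmatch ts bs = Some vs -> ceq A Zero ->
  decodable (nbindT ts + d) (body_ren (nbindT ts) d (S (nbindT ts)) (fun i => i)) B ->
  ceq (Par (subst (inst (repeat (PVar d) (S (length bs)))) A)
           (subst (inst (map PVar vs ++ [PVar d])) B))
      (tr d (lren (linst vs)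
               (decode (nbindT ts + d) (body_ren (nbindT ts) d (S (nbindT ts)) (fun i => i)) B))).
Proof.
  intros Hm ZA DB.
  eapply ceq_trans; [apply ceq_par_l, ceq_subst_output, ZA |].
  eapply ceq_trans; [apply ceq_par_comm |]; eapply ceq_trans; [apply ceq_par_zero |].
  apply ceq_subst_input; [eapply lmatch_length; eauto | exact DB].
Qed.

Lemma decode_comm d p A q B s r :
  decodable d (fun i => i) (Case p A) -> decodable d (fun i => i) (Case q B) ->
  unify p q = Some (s, r) ->
  exists W, lred (LPar (decode d (fun i => i) (Case p A)) (decode d (fun i => i) (Case q B))) W /\
            ceq (Par (subst (inst s) A) (subst (inst r) B)) (tr d W).
Proof.
  simpl; rewrite !pren_id, !ren_upn_id; intros Dp Dq Hu.
  destruct (patb_of d p) as [bs|] eqn:Ebp;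
    [apply patb_of_sound in Ebp; subst p |
     destruct (patt_of d p) as [ts|] eqn:Etp;
     [apply patt_of_sound in Etp; subst p | contradiction]];
  (destruct (patb_of d q) as [bs'|] eqn:Ebq;
    [apply patb_of_sound in Ebq; subst q |
     destruct (patt_of d q) as [ts'|] eqn:Etq;
     [apply patt_of_sound in Etq; subst q | contradiction]]).
  - rewrite unify_patb_patb in Hu; discriminate.
  - rewrite unify_patb_patt in Hu; destruct (lmatch ts' bs) as [vs|] eqn:Hm; [|discriminate].
    injection Hu as <- <-; rewrite nbind_patt in *; destruct Dq as [DB _].
    eexists; split; [apply lred_comm, Hm | apply ceq_comm_reduct; auto].
  - rewrite unify_patt_patb in Hu; destruct (lmatch ts bs') as [vs|] eqn:Hm; [|discriminate].
    injection Hu as <- <-; rewrite nbind_patt in *; destruct Dp as [DA _].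
    eexists; split.
    + eapply lred_struct; [apply leq_par_comm | apply lred_comm, Hm | apply leq_refl].
    + eapply ceq_trans; [apply ceq_par_comm | apply ceq_comm_reduct; auto].
  - rewrite unify_patt_patt in Hu; discriminate.
Qed.

Lemma decode_cred d X Y : decodable d (fun i => i) X -> cred X Y ->
  exists W, lred (decode d (fun i => i) X) W /\ ceq Y (tr d W).
Proof.
  intros D HXY.
  destruct (cred_normal_form _ _ HXY) as (n & p & A & q & B & R & s & r & Hu & HX & HY).
  apply (decodable_ceq _ _ HX), decodable_nus in D; destruct D as [[Dp Dq] DR].
  destruct (decode_comm _ _ _ _ _ _ _ Dp Dq Hu) as (W & HW & EW).
  exists (lnus n (LPar W (decode (n + d) (fun i => i) R))); split.
  - eapply lred_struct; [apply (leq_decode _ _ HX) | | apply leq_refl].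
    rewrite decode_nus; apply lred_lnus, lred_par, HW.
  - rewrite tr_lnus; eapply ceq_trans; [exact HY |]; apply ceq_nus; simpl.
    eapply ceq_trans; [apply ceq_par_l, EW | apply ceq_par_r].
    rewrite <- (ren_id R) at 1; apply ceq_sym, tr_decode, DR.
Qed.

Theorem theorem4p8 (c : nat) (P : lproc) :
  (forall P' : lproc, lred P P' -> cred (tr c P) (tr c P')) /\
  (forall Q : proc, cred (tr c P) Q ->
     exists P' : lproc, lred P P' /\ ceq Q (tr c P')).
Proof.
  split.
  - intros P' H; apply tr_lred, H.
  - intros Q HQ.
    rewrite <- (lren_id P), <- (decode_tr P c (fun i => i)).
    apply decode_cred; [apply (decodable_tr P c (fun i => i)) | exact HQ].
Qed.
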